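(* Let $X_1,X_2$ be independent integer random variables with $\mathbb P(X_1=0)=\frac{\sqrt2-1}{\sqrt2}$, $\mathbb P(X_1=1)=\frac1{\sqrt2}$, and $\mathbb P(X_2=-k)=\sqrt2(\sqrt2-1)^{k+1}$ for $k=0,1,2,\dots$, and let $X=X_1+X_2$. Then $\mathbb E(X)=0$, $\operatorname{Var}(X)=\sqrt2$, and for all $x,y\in\mathbb Z$ $$T(x,y)=(\sqrt2+1)^{2-y+x}\,\mathbb P(X=y-x).$$ Equivalently, for every $f\in\ell^1(\mathbb Z)$, $(Tf)(x)=(\sqrt2+1)^2\,\mathbb E\big((\sqrt2+1)^{-X}f(x+X)\big)$.
   Context: $T(x,y)=2$ if $y\le x$, $T(x,y)=1$ if $y=x+1$, $T(x,y)=0$ if $y>x+1$ ($x,y\in\mathbb Z$), and $(Tf)(x)=\sum_{y\in\mathbb Z}T(x,y)f(y)$. *)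

From HB Require Import structures.
From mathcomp Require Import all_boot all_order all_algebra.
From mathcomp Require Import all_classical all_reals all_analysis.
Set Implicit Arguments. Unset Strict Implicit. Unset Printing Implicit Defensive.
Import Order.TTheory GRing.Theory Num.Theory.
Import numFieldTopology.Exports numFieldNormedType.Exports.
Local Open Scope classical_set_scope.
Local Open Scope ring_scope.

Definition Tker (R : realType) (x y : int) : R :=
  if (y <= x)%R then 2 else if y == x + 1 then 1 else 0.

Definition Zpsum (R : realType) (g : int -> R) (N : nat) : R :=
  \sum_(0 <= i < (N.*2).+1) g (i%:Z - N%:Z).

Definition ell1 (R : realType) (f : int -> R) : Prop :=
  exists M : R, forall N, Zpsum (fun y => `|f y|) N <= M.

Definition Zsum (R : realType) (g : int -> R) : R := lim (Zpsum g @ \oo).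

Definition Top (R : realType) (f : int -> R) (x : int) : R :=
  Zsum (fun y => Tker R x y * f y).

Definition indep2 d (Omega : measurableType d) (R : realType)
  (P : probability Omega R) (X Y : Omega -> R) : Prop :=
  forall A B : set R, measurable A -> measurable B ->
    P (X @^-1` A `&` Y @^-1` B) = (P (X @^-1` A) * P (Y @^-1` B))%E.

From HB Require Import structures.
From mathcomp Require Import all_boot all_order all_algebra.
From mathcomp Require Import all_classical all_reals all_analysis.
From mathcomp Require Import ring lra zify.
Import Order.TTheory GRing.Theory Num.Theory.
Import numFieldTopology.Exports numFieldNormedType.Exports.
Local Open Scope classical_set_scope.
Local Open Scope ring_scope.

(* X1 is almost surely 0 or 1, and -X2 is geometric with ratio q = sqrt 2 - 1
   (the masses of the events [X2 = -k] already sum to 1), so P(X = m) is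
   2 q^(2-m) for m <= 0, q for m = 1 and 0 otherwise.  Since (sqrt 2 + 1) q = 1,
   multiplying this law by (sqrt 2 + 1)^(2-m) gives exactly T(x, x + m).
   The symmetric partial sums of the first two moments have closed forms that
   differ from 0 and sqrt 2 by polynomials in n times q^n.  For an integer-valued
   random variable Y, E h(Y) is the limit of the symmetric partial sums of
   h(m) P(Y = m) as soon as those of |h(m)| P(Y = m) are bounded (monotone, then
   dominated convergence on the truncations of h); applied to x + X and
   h(y) = (sqrt 2 + 1)^(x-y) f(y), this turns the series (Tf)(x) into the stated
   expectation. *)

Section ratio_bound.
Variable R : realType.

Lemma cvg0_ratio_le (u : R ^nat) (a : R) (N : nat) : 0 <= a < 1 ->
  (forall n, 0 <= u n) -> (forall n, (N <= n)%N -> u n.+1 <= a * u n) ->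
  u @ \oo --> 0.
Proof.
move=> /andP[a0 a1] u0 ratio.
have geom n : u (n + N)%N <= u N * a ^+ n.
  elim: n => [|n IH]; first by rewrite add0n expr0 mulr1.
  rewrite addSn exprS mulrCA; apply: le_trans (ratio _ (leq_addl _ _)) _.
  exact: ler_wpM2l.
rewrite -(cvg_shiftn N).
apply: (squeeze_cvgr (f := cst 0) (h := fun n => u N * a ^+ n)).
- by apply: nearW => n; rewrite u0 geom.
- exact: cvg_cst.
- rewrite -(mulr0 (u N)); apply: cvgMl_tmp; apply: cvg_expr.
  by rewrite ger0_norm.
Qed.

(* For n >= 3, (n+1)^2 <= 16/9 n^2, so consecutive terms have ratio at most 16/9 z < 1. *)
Lemma natr_sqr_expr_cvg0 (z : R) : 0 <= z < 9/16 ->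
  (fun n : nat => n%:R ^+ 2 * z ^+ n) @ \oo --> 0.
Proof.
move=> /andP[z0 z916]; apply: (@cvg0_ratio_le _ (16/9 * z) 3).
- by apply/andP; split; lra.
- by move=> n; rewrite mulr_ge0 // ?sqr_ge0 ?exprn_ge0.
move=> n n3; rewrite [z ^+ n.+1]exprSr -natr1.
have {}n3 : (3:R) <= n%:R by rewrite (ler_nat R 3 n).
have : (n%:R + 1) ^+ 2 <= 16/9 * n%:R ^+ 2 :> R by rewrite !expr2; nra.
have : 0 <= z ^+ n * z by rewrite mulr_ge0 ?exprn_ge0.
set w := z ^+ n * z; set x := n%:R ^+ 2; set y := (_ + 1) ^+ 2.
have -> : 16/9 * z * (x * z ^+ n) = 16/9 * x * w by rewrite /w; ring.
by move=> w0 yx; apply: ler_wpM2r.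
Qed.

Lemma natr_expr_cvg0 (z : R) : 0 <= z < 9/16 ->
  (fun n : nat => n%:R * z ^+ n) @ \oo --> 0.
Proof.
move=> z_range; have z0 : 0 <= z by case/andP: z_range.
apply: (squeeze_cvgr (f := cst 0) (h := fun n : nat => n%:R ^+ 2 * z ^+ n));
  last 2 first; [exact: cvg_cst | exact: natr_sqr_expr_cvg0 |].
apply: nearW => n; have zn0 : 0 <= z ^+ n by rewrite exprn_ge0.
rewrite mulr_ge0 //=; apply: ler_wpM2r => //.
by case: n {zn0} => [|n]; rewrite ?expr2 ?mul0r // ler_peMl // ler1n.
Qed.

End ratio_bound.

Section symmetric_partial_sums.
Variable R : realType.
Implicit Types g : int -> R.

Lemma Zpsum0 g : Zpsum g 0 = g 0.
Proof. by rewrite /Zpsum /= big_nat1 subrr. Qed.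

Lemma ZpsumS g N : Zpsum g N.+1 = Zpsum g N + g (- (N.+1)%:Z) + g (N.+1)%:Z.
Proof.
rewrite /Zpsum doubleS big_nat_recl // big_nat_recr //=.
have -> : \sum_(0 <= i < N.*2.+1) g (i.+1%:Z - N.+1%:Z) =
          \sum_(0 <= i < N.*2.+1) g (i%:Z - N%:Z).
  by apply: eq_bigr => i _; congr g; lia.
have -> : (N.*2.+1).+1%:Z - N.+1%:Z = N.+1%:Z by lia.
have -> : 0%:Z - N.+1%:Z = - N.+1%:Z by lia.
ring.
Qed.

Lemma ler_Zpsum g1 g2 N : (forall y, g1 y <= g2 y) -> Zpsum g1 N <= Zpsum g2 N.
Proof. by move=> le12; apply: ler_sum => i _; exact: le12. Qed.

Lemma Zpsum_mulr g a N : Zpsum (fun y => a * g y) N = a * Zpsum g N.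
Proof. by rewrite /Zpsum mulr_sumr. Qed.

Lemma Zpsum_delta g (j : int) N :
  Zpsum (fun y => g y * (y == j)%:R) N = if - N%:Z <= j <= N%:Z then g j else 0.
Proof.
rewrite /Zpsum; case: ifP => [/andP[jlo jhi] | jout].
  have jN : (absz (j + N%:Z))%:Z = j + N%:Z by rewrite gez0_abs; lia.
  have kE : (absz (j + N%:Z))%:Z - N%:Z = j by lia.
  rewrite (bigD1_seq (absz (j + N%:Z))) ?iota_uniq ?mem_index_iota //=; last by lia.
  rewrite kE eqxx mulr1 big1 ?addr0 // => i /eqP ij.
  have -> : (i%:Z - N%:Z == j) = false; last by rewrite mulr0.
  by apply/negbTE/eqP => ji; apply/ij/eqP; rewrite -eqz_nat jN; apply/eqP; lia.
rewrite big1_seq // => i /andP[_]; rewrite mem_index_iota => irange.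
have -> : (i%:Z - N%:Z == j) = false; last by rewrite mulr0.
apply/negbTE/eqP => ij; suff : - N%:Z <= j <= N%:Z by rewrite jout.
by apply/andP; split; lia.
Qed.

End symmetric_partial_sums.

Section integer_casts.
Variable R : realType.

Lemma intr_natz n : (n%:Z)%:~R = n%:R :> R.
Proof. by rewrite -pmulrn. Qed.

Lemma normr_intr_le_sqr (y : int) : `|y%:~R| <= y%:~R * y%:~R :> R.
Proof.
case: y => n; rewrite ?NegzE ?intrN ?normrN ?mulrNN intr_natz ger0_norm //.
  by rewrite -natrM ler_nat; nia.
by rewrite -natrM ler_nat; nia.
Qed.

End integer_casts.

Section sqrt2.
Variable R : realType.
Local Notation s := (Num.sqrt (2:R)).
Local Notation q := (Num.sqrt (2:R) - 1).
Local Notation r := (Num.sqrt (2:R) + 1).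

Lemma sqrt2_sqr : s * s = 2.
Proof. by rewrite -expr2 sqr_sqrtr. Qed.

Lemma sqrt2_gt1 : 1 < s.
Proof. have := sqrt2_sqr; have := sqrtr_ge0 (2:R); nra. Qed.

Lemma sqrt2_neq0 : s != 0.
Proof. by rewrite gt_eqF // (lt_trans ltr01 sqrt2_gt1). Qed.

Lemma sqrt2B1_gt_third : 1/3 < q.
Proof. have := sqrt2_sqr; have := sqrtr_ge0 (2:R); nra. Qed.

Lemma sqrt2B1_gt0 : 0 < q.
Proof. by have := sqrt2B1_gt_third; lra. Qed.

Lemma sqrt2B1_lt_half : q < 1/2.
Proof. have := sqrt2_sqr; have := sqrtr_ge0 (2:R); nra. Qed.

Lemma sqrt2B1_root : q ^+ 2 + 2 * q - 1 = 0.
Proof. by have := sqrt2_sqr; rewrite expr2; lra. Qed.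

Lemma eq_mod_sqrt2B1_root (a b K : R) : a - b = K * (q ^+ 2 + 2 * q - 1) -> a = b.
Proof. by rewrite sqrt2B1_root mulr0 => /eqP; rewrite subr_eq0 => /eqP. Qed.

Lemma sum_sqrt2_sqrt2B1_expr n : \sum_(k < n) s * q ^+ k.+1 = 1 - q ^+ n.
Proof.
elim: n => [|n IH]; first by rewrite big_ord0 expr0 subrr.
rewrite big_ord_recr /= IH; apply: (@eq_mod_sqrt2B1_root _ _ (q ^+ n)).
by rewrite !exprS; ring.
Qed.

Lemma sqrt2D1_sqrt2B1 : r * q = 1.
Proof. by have := sqrt2_sqr; lra. Qed.

Lemma sqrt2D1_gt0 : 0 < r.
Proof. by have := sqrt2_gt1; lra. Qed.

Lemma sqrt2B1_expr_cvg0 : (fun n : nat => q ^+ n) @ \oo --> 0.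
Proof.
apply: cvg_expr; rewrite gtr0_norm ?sqrt2B1_gt0 //.
by have := sqrt2B1_lt_half; lra.
Qed.

Lemma sqrt2B1_range : 0 <= q < 9/16.
Proof.
have := sqrt2B1_gt0; have := sqrt2B1_lt_half.
by move=> *; apply/andP; split; lra.
Qed.

End sqrt2.

Definition pmfX (R : realType) (m : int) : R :=
  if m <= 0 then 2 * (Num.sqrt 2 - 1) ^+ (`|m|%N.+2)
  else if m == 1 then Num.sqrt 2 - 1 else 0.

Section law_of_X.
Variable R : realType.
Local Notation s := (Num.sqrt (2:R)).
Local Notation q := (Num.sqrt (2:R) - 1).
Local Notation r := (Num.sqrt (2:R) + 1).
Local Notation pmfX := (pmfX R).

Lemma pmfXN (k : nat) : pmfX (- k%:Z) = 2 * q ^+ k.+2.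
Proof. by rewrite /pmfX oppr_le0 lez_nat abszN absz_nat. Qed.

Lemma pmfX0 : pmfX 0 = 2 * q ^+ 2.
Proof. by rewrite /pmfX. Qed.

Lemma pmfXS (k : nat) : pmfX k.+1%:Z = if k == 0%N then q else 0.
Proof. by rewrite /pmfX lez_nat /= eqz_nat eqSS. Qed.

Lemma pmfX_ge0 m : 0 <= pmfX m.
Proof.
have q0 := sqrt2B1_gt0 R; rewrite /pmfX.
case: ifP => _; first by rewrite mulr_ge0 ?exprn_ge0 // ltW.
by case: ifP => _; rewrite // ltW.
Qed.

Lemma Zpsum_moment1 n : Zpsum (fun y => y%:~R * pmfX y) n.+1 =
  (n%:R + 2) * q ^+ n.+2 - (n%:R + 1) * q ^+ n.+3.
Proof.
elim: n => [|n IH].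
  rewrite ZpsumS Zpsum0 pmfXN pmfXS /= intrN !intr_natz !mul0r add0r.
  by apply: (@eq_mod_sqrt2B1_root _ _ _ (- q)); ring.
rewrite ZpsumS IH pmfXN pmfXS /= intrN !intr_natz mulr0 addr0.
apply: (@eq_mod_sqrt2B1_root _ _ _ (- (n%:R + 2) * q ^+ n.+2)).
by rewrite !exprS -?[n.+2]addn2 -?[n.+1]addn1 !natrD; ring.
Qed.

Lemma Zpsum_moment2 n : Zpsum (fun y => y%:~R * y%:~R * pmfX y) n.+1 =
  s - ((3 * q - 1) * (n%:R + 1) ^+ 2 + 2 * q * (n%:R + 1) + 1) * q ^+ n.+1.
Proof.
elim: n => [|n IH].
  rewrite ZpsumS Zpsum0 pmfXN pmfXS /= intrN !intr_natz !mul0r add0r.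
  by apply: (@eq_mod_sqrt2B1_root _ _ _ (2 * q + 1)); ring.
rewrite ZpsumS IH pmfXN pmfXS /= intrN !intr_natz mulr0 addr0.
apply: (@eq_mod_sqrt2B1_root _ _ _
  (q ^+ n.+1 * (2 * (n%:R + 2) ^+ 2 * q + 1 - (n%:R + 1) ^+ 2))).
by rewrite !exprS -?[n.+2]addn2 -?[n.+1]addn1 !natrD; ring.
Qed.

Lemma Zpsum_moment1_cvg : Zpsum (fun y => y%:~R * pmfX y) @ \oo --> 0.
Proof.
pose u (m : nat) := m%:R * q ^+ m.
rewrite -cvg_shiftS.
have uE n : Zpsum (fun y => y%:~R * pmfX y) n.+1 = u (n + 2)%N - q ^+ 2 * u (n + 1)%N.
  rewrite Zpsum_moment1 /u addn2 addn1 !exprS -[n.+2]addn2 -[n.+1]addn1 !natrD.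
  ring.
have u_cvg0 k : (fun n => u (n + k)%N) @ \oo --> 0.
  by rewrite (cvg_shiftn k u); exact: natr_expr_cvg0 (sqrt2B1_range R).
have lim := cvgB (u_cvg0 2%N) (cvgMl_tmp (a := q ^+ 2) (u_cvg0 1%N)).
by rewrite mulr0 subr0 in lim; rewrite (eq_cvg _ _ uE); exact: lim.
Qed.

Lemma Zpsum_moment2_cvg : Zpsum (fun y => y%:~R * y%:~R * pmfX y) @ \oo --> s.
Proof.
rewrite -cvg_shiftS.
have vE n : Zpsum (fun y => y%:~R * y%:~R * pmfX y) n.+1 = s - ((3 * q - 1) *
   (n.+1%:R ^+ 2 * q ^+ n.+1) + 2 * q * (n.+1%:R * q ^+ n.+1) + q ^+ n.+1).
  by rewrite Zpsum_moment2 natr1; ring.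
have qr := sqrt2B1_range R.
have sq := natr_sqr_expr_cvg0 _ _ qr; have lin := natr_expr_cvg0 _ _ qr.
have geo := sqrt2B1_expr_cvg0 R.
rewrite -cvg_shiftS in sq; rewrite -cvg_shiftS in lin; rewrite -cvg_shiftS in geo.
have lim := cvgB (cvg_cst s) (cvgD (cvgD (cvgMl_tmp (a := 3 * q - 1) sq)
   (cvgMl_tmp (a := 2 * q) lin)) geo).
by rewrite !mulr0 !addr0 subr0 in lim; rewrite (eq_cvg _ _ vE); exact: lim.
Qed.

Lemma Zpsum_moment2_le n : Zpsum (fun y => y%:~R * y%:~R * pmfX y) n <= s.
Proof.
case: n => [|n]; first by rewrite Zpsum0 !mul0r sqrtr_ge0.
rewrite Zpsum_moment2 lerBlDr lerDl; apply: mulr_ge0; last first.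
  by rewrite exprn_ge0 // ltW // sqrt2B1_gt0.
have q3 := sqrt2B1_gt_third R; have n0 : 0 <= n%:R :> R by [].
by apply: addr_ge0 => //; apply: addr_ge0; apply: mulr_ge0; rewrite ?exprn_ge0; lra.
Qed.

Lemma Tker_pmfX (x y : int) : Tker R x y = r ^ (2 - y + x) * pmfX (y - x).
Proof.
have rq k : r ^+ k * q ^+ k = 1 by rewrite -exprMn sqrt2D1_sqrt2B1 expr1n.
rewrite /Tker.
have -> : 2 - y + x = 2 - (y - x) by ring.
have -> : (y <= x) = (y - x <= 0) by rewrite subr_le0.
have -> : (y == x + 1) = (y - x == 1) by apply/eqP/eqP; lia.
case: (y - x) => [[|n]|n].
- by rewrite /= pmfX0 -exprnP mulrCA rq mulr1.
- by rewrite pmfXS; case: n => [|n] /=; rewrite ?mulr0 // -exprnP expr1 sqrt2D1_sqrt2B1.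
- rewrite NegzE pmfXN opprK.
  have -> : (- n.+1%:Z <= 0) = true by lia.
  have -> : 2 + n.+1%:Z = n.+3%:Z by lia.
  by rewrite -exprnP mulrCA rq mulr1.
Qed.

Lemma Tker_le2 x y : Tker R x y <= 2.
Proof. by rewrite /Tker; case: ifP => _ //; case: ifP => _ //; lra. Qed.

End law_of_X.

Section integer_valued_expectation.
Context (R : realType) (d : measure_display) (T : measurableType d)
  (P : probability T R).
Variables (Y : T -> R) (mY : measurable_fun setT Y).
Hypothesis Y_int : forall w, Y w \is a Num.int.
Variable p : int -> R.
Hypothesis P_Y : forall m : int, P (Y @^-1` [set m%:~R]) = (p m)%:E.
Implicit Types h : int -> R.

Local Notation fiber y := (Y @^-1` [set (y%:~R : R)]).

Lemma measurable_fiber y : measurable (fiber y).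
Proof. by rewrite -[X in measurable X]setTI; exact: mY. Qed.

Lemma indic_fiber y w : \1_(fiber y) w = (y == Num.floor (Y w))%:R :> R.
Proof.
rewrite indicE; suff -> : (w \in fiber y) = (y == Num.floor (Y w)) by [].
have Yw : Y w = (Num.floor (Y w))%:~R by rewrite floorK.
apply/idP/idP.
  rewrite inE /= Yw => /eqP; rewrite (inj_eq (@intr_inj _)) => /eqP ->.
  by rewrite intrKfloor.
by move=> /eqP ->; rewrite inE /= -Yw.
Qed.

Definition trunc_comp h (N : nat) w := Zpsum (fun y => h y * \1_(fiber y) w) N.

Lemma trunc_compE h N w :
  trunc_comp h N w = if - N%:Z <= Num.floor (Y w) <= N%:Z then h (Num.floor (Y w)) else 0.
Proof.
by rewrite /trunc_comp -Zpsum_delta; congr Zpsum; apply/funext => y; rewrite indic_fiber.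
Qed.

Lemma measurable_trunc_comp h N : measurable_fun setT (trunc_comp h N).
Proof.
apply: measurable_sum => i; apply: measurable_realfun.measurable_funM.
  exact: measurable_cst.
exact/measurable_realfun.measurable_indic/measurable_fiber.
Qed.

Lemma integral_trunc_comp h N :
  (\int[P]_w (trunc_comp h N w)%:E = (Zpsum (fun y => h y * p y) N)%:E)%E.
Proof.
have intP y : P.-integrable setT (fun w => (\1_(fiber y) w)%:E).
  exact/integrable_indic/measurable_fiber.
rewrite /trunc_comp /Zpsum -sumEFin; under eq_integral do rewrite -sumEFin.
rewrite integral_sum //; last first.
  by move=> i; under eq_fun do rewrite EFinM; exact: integrableZl.
apply: eq_bigr => i _; under eq_integral do rewrite EFinM.
rewrite integralZl // integral_indic ?setIT //; last exact: measurable_fiber.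
by rewrite EFinM; congr (_ * _)%E; exact: P_Y.
Qed.

Lemma trunc_comp_cvg h w : (fun N => trunc_comp h N w) @ \oo --> h (Num.floor (Y w)).
Proof.
apply: cvg_trans (near_eq_cvg _) (cvg_cst (h (Num.floor (Y w)))).
exists `|Num.floor (Y w)|%N => // N /= N_large; rewrite trunc_compE.
have : `|Num.floor (Y w)| <= N%:Z by rewrite -abszE lez_nat.
by rewrite ler_norml => ->.
Qed.

Lemma measurable_comp_floor h : measurable_fun setT (fun w => h (Num.floor (Y w))).
Proof.
apply: (measurable_realfun.measurable_fun_cvg (h := trunc_comp h)).
  exact: measurable_trunc_comp.
by move=> w _; exact: trunc_comp_cvg.
Qed.

Section bounded_absolute_partial_sums.
Variables (h : int -> R) (M : R).
Hypothesis abs_bounded : forall N, Zpsum (fun y => `|h y| * p y) N <= M.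

Lemma integrable_comp_floor : P.-integrable setT (fun w => (h (Num.floor (Y w)))%:E).
Proof.
pose ha y := `|h y|.
have mono : (\int[P]_w (trunc_comp ha n w)%:E)%E @[n --> \oo] -->
            (\int[P]_w limn (fun N => (trunc_comp ha N w)%:E))%E.
  apply: cvg_monotone_convergence => //.
  - by move=> N; apply/measurable_realfun.measurable_EFinP; exact: measurable_trunc_comp.
  - by move=> N w _; rewrite trunc_compE lee_fin; case: ifP => _ //; exact: normr_ge0.
  - move=> w _ n m nm; rewrite !trunc_compE lee_fin.
    case: ifP => /andP n_in; case: ifP => /andP m_in //; last exact: normr_ge0.
    by exfalso; apply: m_in; case: n_in; split; lia.
have limE w : limn (fun N => (trunc_comp ha N w)%:E) = (`|h (Num.floor (Y w))|)%:E.
  apply/cvg_lim => //; apply/fine_cvgP; split; first exact: nearW.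
  exact: trunc_comp_cvg.
apply/integrableP; split; first exact/measurable_realfun.measurable_EFinP/measurable_comp_floor.
under eq_integral do rewrite abse_EFin -limE.
rewrite -(cvg_lim _ mono) //; apply: le_lt_trans (ltry M).
apply: lime_le; first exact: (cvgP _ mono).
by apply: nearW => N; rewrite integral_trunc_comp lee_fin.
Qed.

Lemma expectation_comp_floor : exists l,
  Zpsum (fun y => h y * p y) @ \oo --> l /\ ('E_P[fun w => h (Num.floor (Y w))] = l%:E)%E.
Proof.
have intG := integrable_comp_floor.
have trunc_cvg : \forall w \ae P, setT w ->
    (fun N => (trunc_comp h N w)%:E) @ \oo --> (h (Num.floor (Y w)))%:E.
  apply: aeW => w _; apply/fine_cvgP; split; first exact: nearW.
  exact: trunc_comp_cvg.
have trunc_dominated : \forall w \ae P, forall N, setT w ->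
    (`|(trunc_comp h N w)%:E| <= (`|h (Num.floor (Y w))|)%:E)%E.
  apply: aeW => w N _; rewrite abse_EFin lee_fin trunc_compE.
  by case: ifP; rewrite ?normr0.
have [_ _] := dominated_convergence (mu := P) measurableT
  (f_ := fun N w => (trunc_comp h N w)%:E) (f := fun w => (h (Num.floor (Y w)))%:E)
  (fun N => (measurable_realfun.measurable_EFinP _ _).2 (measurable_trunc_comp h N))
  ((measurable_realfun.measurable_EFinP _ _).2 (measurable_comp_floor h))
  trunc_cvg (integrable_norm intG) trunc_dominated.
have fin := integrable_fin_num measurableT intG.
rewrite -(fineK fin) (eq_cvg _ _ (integral_trunc_comp h)) => /fine_cvgP[_ sums_cvg].
by exists (fine (\int[P]_w (h (Num.floor (Y w)))%:E)%E); rewrite unlock /= fineK.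
Qed.

End bounded_absolute_partial_sums.

End integer_valued_expectation.

Section proposition.
Context (R : realType) (d : measure_display) (T : measurableType d)
  (P : probability T R) (X1 X2 : {RV P >-> R}).
Local Notation s := (Num.sqrt (2:R)).
Local Notation q := (Num.sqrt (2:R) - 1).
Local Notation r := (Num.sqrt (2:R) + 1).
Hypothesis X1X2_indep : indep2 P X1 X2.
Hypothesis P_X1_0 : P (X1 @^-1` [set 0]) = ((s - 1) / s)%:E.
Hypothesis P_X1_1 : P (X1 @^-1` [set 1]) = (1 / s)%:E.
Hypothesis P_X2N : forall k : nat, P (X2 @^-1` [set - k%:R]) = (s * q ^+ k.+1)%:E.

Local Notation X := (fun w => X1 w + X2 w).
Local Notation A0 := (X1 @^-1` [set 0]).
Local Notation A1 := (X1 @^-1` [set 1]).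
Local Notation B j := (X2 @^-1` [set (j%:~R : R)]).

Let measurable_A0 : measurable A0. Proof. exact: measurable_funPTI. Qed.
Let measurable_A1 : measurable A1. Proof. exact: measurable_funPTI. Qed.
Let measurable_B j : measurable (B j). Proof. exact: measurable_funPTI. Qed.

(* The atoms [X2 = -i], i < n, carry mass 1 - q^n and avoid [X2 = k+1]. *)
Lemma P_X2_gt0 (k : nat) : P (B k.+1%:Z) = 0%E.
Proof.
pose Bn (i : nat) := X2 @^-1` [set - i%:R].
pose U n := \big[setU/set0]_(i < n) Bn i.
have mBn i : measurable (Bn i) by exact: measurable_funPTI.
have mU n : measurable (U n) by apply: bigsetU_measurable => i _.
have tB : trivIset setT Bn.
  move=> i j _ _ [w [hi hj]]; rewrite /Bn /= in hi hj; rewrite hi in hj.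
  by move/eqP: hj; rewrite eqr_opp eqr_nat => /eqP.
have PU n : P (U n) = (1 - q ^+ n)%:E.
  rewrite measure_bigsetU // -sum_sqrt2_sqrt2B1_expr -sumEFin.
  by apply: eq_bigr => i _; exact: P_X2N.
have U_le0 n : U n `<=` [set w | X2 w <= 0].
  elim: n => [|n IH]; first by rewrite /U big_ord0.
  by rewrite /U big_ord_recr /= => w [/IH //|]; rewrite /Bn /= => ->; rewrite oppr_le0.
have PB_le n : (P (B k.+1%:Z) <= (q ^+ n)%:E)%E.
  apply: (@le_trans _ _ (P (~` U n))).
    apply: le_measure; rewrite ?inE; [exact: measurable_B | exact: measurableC |].
    move=> w /= Bw Uw; have := U_le0 n w Uw; rewrite /= Bw intr_natz.
    by have := ltr0Sn R k; lra.
  by rewrite probability_setC // PU -EFinB opprB addrC subrK.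
have fin : P (B k.+1%:Z) \is a fin_num by rewrite fin_num_measure.
have : fine (P (B k.+1%:Z)) <= 0.
  have geo := sqrt2B1_expr_cvg0 R.
  rewrite -(cvg_lim _ geo) //; apply: limr_ge; first exact: (cvgP _ geo).
  by apply: nearW => n; rewrite -lee_fin fineK.
move=> PB0; apply/eqP; rewrite eq_le measure_ge0 andbT.
by rewrite -(fineK fin) lee_fin.
Qed.

Lemma X1_fibers_disjoint : A0 `&` A1 = set0.
Proof.
apply/seteqP; split => w //= [-> /eqP].
by rewrite eq_sym oner_eq0.
Qed.

Lemma P_X1_not01 : P (~` (A0 `|` A1)) = 0%E.
Proof.
rewrite probability_setC; last exact: measurableU.
have -> : P (A0 `|` A1) = (P A0 + P A1)%E.
  by apply: measureU => //; exact: X1_fibers_disjoint.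
rewrite P_X1_0 P_X1_1 -EFinD.
have -> : (s - 1) / s + 1 / s = 1 by field; exact: sqrt2_neq0.
by rewrite subrr.
Qed.

Lemma P_X_decomp (m : int) : P (X @^-1` [set m%:~R]) =
  (P A0 * P (B m) + P A1 * P (B (m - 1)))%E.
Proof.
set S := X @^-1` _; set U := A0 `|` A1.
have mS : measurable S.
  rewrite -[S]setTI; apply: measurable_realfun.measurable_funD => //;
  exact: measurable_funPT.
have mU : measurable U by exact: measurableU.
have -> : P S = (P (S `\` U) + P (S `&` U))%E by exact: measureDI.
have -> : P (S `\` U) = 0%E.
  apply: (subset_measure0 (B := ~` U)); last exact: P_X1_not01.
  - exact: measurableD.
  - exact: measurableC.
  - by move=> w [].
have -> : S `&` U = (A0 `&` B m) `|` (A1 `&` B (m - 1)).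
  apply/seteqP; split => w /=.
    move=> [Sw [A0w|A1w]]; rewrite /S /= in Sw.
      by left; split => //; rewrite /= -Sw A0w add0r.
    by right; split => //; rewrite /= intrB -Sw A1w addrAC subrr add0r.
  move=> [[A0w Bw]|[A1w Bw]]; rewrite /S /=.
    by split; [rewrite /= A0w Bw add0r | left].
  by split; [rewrite /= A1w Bw intrB; lra | right].
rewrite add0e -!X1X2_indep //; try exact: measurable_set1.
apply: measureU; try exact: measurableI.
by rewrite setIACA X1_fibers_disjoint set0I.
Qed.

Lemma P_X (m : int) : P (X @^-1` [set m%:~R]) = (pmfX R m)%:E.
Proof.
have BN (j : int) (k : nat) : j = - k%:Z -> P (B j) = (s * q ^+ k.+1)%:E.
  by move=> ->; rewrite intrN intr_natz; exact: P_X2N.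
have BS (j : int) (k : nat) : j = k.+1%:Z -> P (B j) = 0%E.
  by move=> ->; exact: P_X2_gt0.
have s0 := sqrt2_neq0 R.
rewrite P_X_decomp P_X1_0 P_X1_1.
case: m => [[|n]|n].
- rewrite (BN 0 0) // (BN (0 - 1) 1) // pmfX0 -!EFinM -EFinD; congr EFin.
  by field.
- rewrite (BS _ n) // pmfXS mule0 add0e; case: n => [|n].
    by rewrite (BN (1 - 1) 0) // -EFinM /=; congr EFin; field.
  by rewrite (BS (n.+2%:Z - 1) n) ?mule0 // -[n.+2]addn1 PoszD addrK.
- rewrite (BN _ n.+1) ?NegzE // (BN (- n.+1%:Z - 1) n.+2); last first.
    by rewrite -opprD -[n.+2]addn1 PoszD.
  by rewrite pmfXN -!EFinM -EFinD; congr EFin; rewrite !exprS; field.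
Qed.

Hypothesis X1_int : forall w, X1 w \is a Num.int.
Hypothesis X2_int : forall w, X2 w \is a Num.int.

Let X_int w : X w \is a Num.int. Proof. by rewrite rpredD. Qed.

Let measurable_X : measurable_fun setT X.
Proof.
by apply: measurable_realfun.measurable_funD; exact: measurable_funPT.
Qed.

Let X_floorK : X = (fun w => (Num.floor (X w))%:~R).
Proof. by apply/funext => w; rewrite floorK. Qed.

Lemma expectation_X : ('E_P[X] = 0)%E.
Proof.
have bounded N : Zpsum (fun y => `|y%:~R| * pmfX R y) N <= s.
  apply: le_trans (Zpsum_moment2_le R N); apply: ler_Zpsum => y.
  by apply: ler_wpM2r; [exact: pmfX_ge0 | exact: normr_intr_le_sqr].
rewrite X_floorK; have [l [cvg_l ->]] :=
  @expectation_comp_floor _ _ _ P _ measurable_X X_int _ P_X _ _ bounded.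
by congr EFin; exact: cvg_unique cvg_l (Zpsum_moment1_cvg R).
Qed.

Lemma variance_X : ('V_P[X] = s%:E)%E.
Proof.
have bounded N : Zpsum (fun y => `|y%:~R * y%:~R| * pmfX R y) N <= s.
  apply: le_trans (Zpsum_moment2_le R N); apply: ler_Zpsum => y.
  by rewrite ger0_norm // -expr2 sqr_ge0.
rewrite /variance covariance.unlock expectation_X /=.
have -> : ((X \- cst 0) * (X \- cst 0))%R =
    (fun w => (Num.floor (X w))%:~R * (Num.floor (X w))%:~R) :> (T -> R).
  apply/funext => w; rewrite floorK //.
  by change ((X w - 0) * (X w - 0) = X w * X w); rewrite subr0.
have [l [cvg_l ->]] :=
  @expectation_comp_floor _ _ _ P _ measurable_X X_int _ P_X _ _ bounded.
by congr EFin; exact: cvg_unique cvg_l (Zpsum_moment2_cvg R).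
Qed.

Lemma Tker_P_X (x y : int) :
  ((Tker R x y)%:E = (r ^ (2 - y + x))%:E * P (X @^-1` [set (y - x)%:~R]))%E.
Proof. by rewrite P_X -EFinM Tker_pmfX. Qed.

Lemma Top_expectation (f : int -> R) (x : int) : ell1 f ->
  ((Top f x)%:E = (r ^+ 2)%:E *
     'E_P[fun w => (powR r (- X w) * f (x + Num.floor (X w)))%R])%E.
Proof.
move=> [M f_bounded]; have r0 := sqrt2D1_gt0 R.
pose Y w := x%:~R + X w.
have mY : measurable_fun setT Y.
  by apply: measurable_realfun.measurable_funD => //; exact: measurable_cst.
have Y_int w : Y w \is a Num.int by rewrite rpredD ?intr_int.
have P_Y (m : int) : P (Y @^-1` [set m%:~R]) = (pmfX R (m - x))%:E.
  rewrite -P_X; congr (P _); apply/seteqP; split => w /=; rewrite intrB.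
    by move=> <-; rewrite /Y; lra.
  by rewrite /Y => ->; lra.
pose h y := r ^ (x - y) * f y.
have TkerE y : Tker R x y = r ^+ 2 * (r ^ (x - y) * pmfX R (y - x)).
  rewrite Tker_pmfX mulrA exprnP -exprzDr ?unitf_gt0 //.
  by congr (_ ^ _ * _); lia.
have bounded N : Zpsum (fun y => `|h y| * pmfX R (y - x)) N <= (r ^+ 2)^-1 * (2 * M).
  have -> : Zpsum (fun y => `|h y| * pmfX R (y - x)) N =
      (r ^+ 2)^-1 * Zpsum (fun y => Tker R x y * `|f y|) N.
    rewrite -Zpsum_mulr; congr Zpsum; apply/funext => y.
    rewrite TkerE /h normrM (ger0_norm (ltW (exprz_gt0 _ r0))).
    by field; rewrite gt_eqF.
  apply: ler_wpM2l; first by rewrite invr_ge0 exprn_ge0 // ltW.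
  apply: (@le_trans _ _ (Zpsum (fun y => 2 * `|f y|) N)).
    by apply: ler_Zpsum => y; apply: ler_wpM2r; [exact: normr_ge0 | exact: Tker_le2].
  by rewrite Zpsum_mulr ler_wpM2l.
have [l [cvg_l El]] :=
  @expectation_comp_floor _ _ _ P _ mY Y_int _ P_Y h _ bounded.
have cvgT : Zpsum (fun y => Tker R x y * f y) @ \oo --> r ^+ 2 * l.
  have -> : Zpsum (fun y => Tker R x y * f y) =
      (fun N => r ^+ 2 * Zpsum (fun y => h y * pmfX R (y - x)) N).
    apply/funext => N; rewrite -Zpsum_mulr; congr Zpsum; apply/funext => y.
    by rewrite TkerE /h; ring.
  exact: cvgMl_tmp.
rewrite /Top /Zsum (cvg_lim _ cvgT) // EFinM -El; congr (_ * 'E_P[_])%E.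
apply/funext => w; rewrite /h /Y floorDzr ?intr_int // intrKfloor.
rewrite opprD addrA subrr add0r -{3}(floorK (X_int w)) -intrN powR_intmul ?ltW //.
Qed.

End proposition.

Theorem proposition2p1 (R : realType) (d : measure_display)
  (Omega : measurableType d) (P : probability Omega R)
  (X1 X2 : {RV P >-> R}) :
  (forall w, X1 w \is a Num.int) ->
  (forall w, X2 w \is a Num.int) ->
  indep2 P X1 X2 ->
  P (X1 @^-1` [set 0]) = ((Num.sqrt 2 - 1) / Num.sqrt 2)%:E ->
  P (X1 @^-1` [set 1]) = (1 / Num.sqrt 2)%:E ->
  (forall k : nat,
     P (X2 @^-1` [set - k%:R]) = (Num.sqrt 2 * (Num.sqrt 2 - 1) ^+ k.+1)%:E) ->
  let X := (fun w => X1 w + X2 w) in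
  [/\ ('E_P[X] = 0)%E,
      ('V_P[X] = (Num.sqrt 2)%:E)%E,
      (forall x y : int,
         (Tker R x y)%:E =
         ((Num.sqrt 2 + 1) ^ (2 - y + x))%:E * P (X @^-1` [set (y - x)%:~R]))%E
    & (forall f : int -> R, ell1 f -> forall x : int,
         (Top f x)%:E =
         ((Num.sqrt 2 + 1) ^+ 2)%:E *
         'E_P[fun w => (powR (Num.sqrt 2 + 1) (- X w) * f (x + Num.floor (X w)))%R])%E].
Proof.
move=> X1_int X2_int indep P_X1_0 P_X1_1 P_X2N X; split.
- by apply: expectation_X.
- by apply: variance_X.
- by move=> x y; apply: Tker_P_X.
- by move=> f f_ell1 x; apply: Top_expectation.
Qed.
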